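(* Let $\alpha\in\mathbb C$, $m\in\mathbb N$. The map $\Upsilon_{(\alpha,m)}:\widehat R\to\mathbb C[[\rho]][\sigma]/(\sigma^m)$, $h\mapsto\gamma\big(\widehat T_{(\alpha,2m)}(h)\big)$, is a group homomorphism from $(\widehat R,+)$ to $(\mathbb C[[\rho]][\sigma]/(\sigma^m),\circ)$.
   Context: $\widehat R=\mathbb C[[z_1,z_2]]=\mathbb C[[\rho\cos\varphi,\rho\sin\varphi]]$; for $f\in\widehat R$ and $i\in\mathbb N_0$, $f^{(i)}_\alpha=\partial^if/\partial\varphi^i|_{\varphi=\alpha}\in\mathbb C[[\rho]]$, and $T_{(\alpha,k)}(f)=\sum_{i=0}^{k-1}f^{(i)}_\alpha\varepsilon^i/i!\in\mathbb C[[\rho]][\varepsilon]/(\varepsilon^k)$. For $h\in\widehat R$, $\widehat T_{(\alpha,k)}(h)\in\mathbb C[[\rho]][\varepsilon]/(\varepsilon^{k})$ is defined by $T_{(\alpha,k)}(\exp(h))=\widehat T_{(\alpha,k)}(h)\cdot\exp(h^{(0)}_\alpha)$. For a ring $\Bbbk$, $K=\Bbbk[\varepsilon^2]/(\varepsilon^{2m})\subset L=\Bbbk[\varepsilon]/(\varepsilon^{2m})$ and a unit $g\in L$, $\gamma(g)$ denotes the unique element of $K$ with $g\cdot(1+\varepsilon\gamma(g))\in K$; here $\Bbbk=\mathbb C[[\rho]]$ and $K$ is identified with $\mathbb C[[\rho]][\sigma]/(\sigma^m)$ via $\sigma=\varepsilon^2$. The operation is $\gamma_1\circ\gamma_2=(\gamma_1+\gamma_2)(1+\sigma\gamma_1\gamma_2)^{-1}$.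 *)

From HB Require Import structures.
From mathcomp Require Import all_boot all_order all_algebra.
From mathcomp Require Import reals.
From mathcomp Require Import sequences exp trigo.
From mathcomp Require Import complex.
From Stdlib Require Import ClassicalEpsilon.
Set Implicit Arguments. Unset Strict Implicit. Unset Printing Implicit Defensive.
Import Order.TTheory GRing.Theory Num.Theory.
Local Open Scope ring_scope.

Section Defs.
Variable R : realType.
Local Notation C := (R[i]).

Definition coshR (y : R) : R := (expR y + expR (- y)) / 2.
Definition sinhR (y : R) : R := (expR y - expR (- y)) / 2.
Definition cosC (z : C) : C :=
  Complex (cos (complex.Re z) * coshR (complex.Im z))
          (- (sin (complex.Re z) * sinhR (complex.Im z))).
Definition sinC (z : C) : C :=
  Complex (sin (complex.Re z) * coshR (complex.Im z))
          (cos (complex.Re z) * sinhR (complex.Im z)).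

(* Rhat = C[[z1,z2]] : f j k is the coefficient of z1^j z2^k. *)
Definition Rhat := nat -> nat -> C.
Definition Rhat_add (f g : Rhat) : Rhat := fun j k => f j k + g j k.

(* Elements of C[[rho]][eps] (resp. C[[rho]][sigma]) : x i n is the coefficient
   of eps^i rho^n (resp. sigma^i rho^n). *)
Definition ser := nat -> nat -> C.
Definition ser0 : ser := fun _ _ => 0.
Definition ser1 : ser := fun i n => ((i == 0%N) && (n == 0%N))%:R.
Definition ser_add (x y : ser) : ser := fun i n => x i n + y i n.
Definition ser_mul (x y : ser) : ser := fun i n =>
  \sum_(i1 < i.+1) \sum_(n1 < n.+1) x i1 n1 * y (i - i1)%N (n - n1)%N.
Definition ser_shift (x : ser) : ser := fun i n => if i is i'.+1 then x i' n else 0.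
(* reduction modulo (variable)^k : canonical representative *)
Definition ser_trunc (k : nat) (x : ser) : ser := fun i n => if (i < k)%N then x i n else 0.
Definition reduced (k : nat) (x : ser) : Prop := forall i n, (k <= i)%N -> x i n = 0.
Definition eqmod (k : nat) (x y : ser) : Prop := forall i n, (i < k)%N -> x i n = y i n.

(* Trigonometric polynomials in (cos phi, sin phi): {poly {poly C}},
   outer variable = cos phi, inner variable = sin phi.  d/dphi acts as the
   derivation with d(cos) = - sin, d(sin) = cos (chain rule). *)
Definition TP := {poly {poly C}}.
Definition cvar : TP := 'X.
Definition svar : TP := ('X)%:P.
Definition dphi (p : TP) : TP :=
  svar * - (p^`()) + cvar * map_poly (@deriv C) p.
Definition ev_at (a : C) (p : TP) : C := (p.[(cosC a)%:P]).[sinC a].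

(* f^{(i)}_alpha in C[[rho]]: the coefficient of rho^n of
   d^i/dphi^i f(rho cos phi, rho sin phi) at phi = alpha. *)
Definition fder (f : Rhat) (a : C) (i : nat) : nat -> C := fun n =>
  \sum_(j < n.+1) f j (n - j)%N * ev_at a (iter i dphi (cvar ^+ j * svar ^+ (n - j))).

Definition Tay (a : C) (k : nat) (f : Rhat) : ser := fun i n =>
  if (i < k)%N then fder f a i n / (i`!)%:R else 0.

(* \hat T_{(alpha,k)}(h): T(exp h) = \hat T(h) * exp(h^{(0)}_alpha), i.e.
   \hat T(h) = exp(T(h) - h^{(0)}_alpha), a finite (nilpotent) exponential. *)
Definition nilpart (a : C) (k : nat) (h : Rhat) : ser := fun i n =>
  if i is 0%N then 0 else Tay a k h i n.
Definition Tayhat (a : C) (k : nat) (h : Rhat) : ser :=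
  let N := nilpart a k h in
  ser_trunc k (fun i n => \sum_(j < k) iter j (ser_mul N) ser1 i n / (j`!)%:R).

(* embedding of K = k[sigma]/(sigma^m) into L via sigma = eps^2 *)
Definition embK (x : ser) : ser := fun i n => if odd i then 0 else x i./2 n.
(* x in L = k[eps]/(eps^(2m)) lies in K *)
Definition inK (m : nat) (x : ser) : Prop := forall i n, (i < 2 * m)%N -> odd i -> x i n = 0.

(* gamma(g): the unique element of K with g (1 + eps gamma(g)) in K *)
Definition gammaK (m : nat) (g : ser) : ser :=
  epsilon (inhabits ser0) (fun c => reduced m c /\
    inK m (ser_mul g (ser_add ser1 (ser_shift (embK c))))).

Definition invK (m : nat) (x : ser) : ser :=
  epsilon (inhabits ser0) (fun y => reduced m y /\ eqmod m (ser_mul x y) ser1).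

Definition circ (m : nat) (g1 g2 : ser) : ser :=
  ser_trunc m (ser_mul (ser_add g1 g2)
     (invK m (ser_add ser1 (ser_shift (ser_mul g1 g2))))).

Definition Upsilon (a : C) (m : nat) (h : Rhat) : ser := gammaK m (Tayhat a (2 * m) h).

End Defs.

(* Work in L = C[[rho]][eps] modulo eps^2m, with K its even part.  The part of
   T_(alpha,2m)(h) without constant term is additive in h, and
   \hat T_(alpha,2m)(h) is its truncated exponential, hence
   \hat T(h1 + h2) = \hat T(h1) \hat T(h2) in L.  Any g = 1 + O(eps) splits
   as a(eps^2) + eps b(eps^2) with a a unit, so gamma(g) = - b / a exists; it
   is unique because a unit times eps d has a nonzero odd coefficient unless
   d = 0.  Finally, if g1 (1 + eps c1) and g2 (1 + eps c2) lie in K, then so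
   does g1 g2 ((1 + sigma c1 c2) + eps (c1 + c2)), and dividing by the unit
   1 + sigma c1 c2 of K gives gamma(g1 g2) = c1 o c2. *)

From HB Require Import structures.
From mathcomp Require Import all_boot all_order all_algebra.
From mathcomp Require Import boolp reals complex.
From Stdlib Require Import ClassicalEpsilon.
From mathcomp Require Import zify ring.
Set Implicit Arguments. Unset Strict Implicit. Unset Printing Implicit Defensive.
Import Order.TTheory GRing.Theory Num.Theory.
Local Open Scope ring_scope.

Section SeriesAlgebra.
Variable R : realType.
Local Notation C := R[i].
Local Notation S := (ser R).

Lemma ser_ext (x y : S) : (forall i n, x i n = y i n) -> x = y.
Proof. by move=> xy; apply/funext => i; apply/funext => n; apply: xy. Qed.

Definition ser_opp (x : S) : S := fun i n => - x i n.

Fact ser_addA : associative (@ser_add R).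
Proof. by move=> x y z; apply: ser_ext => i n; rewrite /ser_add addrA. Qed.
Fact ser_addC : commutative (@ser_add R).
Proof. by move=> x y; apply: ser_ext => i n; rewrite /ser_add addrC. Qed.
Fact ser_add0 : left_id (@ser0 R) (@ser_add R).
Proof. by move=> x; apply: ser_ext => i n; rewrite /ser_add add0r. Qed.
Fact ser_addN : left_inverse (@ser0 R) ser_opp (@ser_add R).
Proof. by move=> x; apply: ser_ext => i n; rewrite /ser_add addNr. Qed.

HB.instance Definition _ := gen_eqMixin S.
HB.instance Definition _ := gen_choiceMixin S.
HB.instance Definition _ :=
  GRing.isZmodule.Build S ser_addA ser_addC ser_add0 ser_addN.

(* The coefficients of [ser_mul x y] of bidegree below [B] only involve those
   of [x] and [y] below [B], so the multiplicative ring laws are inherited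
   from the truncations of [x] and [y] in [{poly {poly C}}]. *)
Definition ser_poly (B : nat) (x : S) : {poly {poly C}} :=
  \poly_(i < B) \poly_(n < B) x i n.

Definition agree_below (B : nat) (x : S) (X : {poly {poly C}}) :=
  forall i n, (i < B)%N -> (n < B)%N -> x i n = X`_i`_n.

Lemma agree_ser_poly B x : agree_below B x (ser_poly B x).
Proof. by move=> i n iB nB; rewrite /ser_poly coef_poly iB coef_poly nB. Qed.

Lemma agree_below_eq (x y : S) :
  (forall B, exists X, agree_below B x X /\ agree_below B y X) -> x = y.
Proof.
move=> xy; apply: ser_ext => i n; have [X [xX yX]] := xy (i + n).+1.
by rewrite xX ?yX // ltnS ?leq_addr ?leq_addl.
Qed.

Lemma coef2M (P Q : {poly {poly C}}) i n : (P * Q)`_i`_n =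
  \sum_(j < i.+1) \sum_(c < n.+1) P`_j`_c * Q`_(i - j)`_(n - c).
Proof. by rewrite coefM coef_sum; apply: eq_bigr => j _; rewrite coefM. Qed.

Lemma agree_mul B x y X Y : agree_below B x X -> agree_below B y Y ->
  agree_below B (ser_mul x y) (X * Y).
Proof.
move=> xX yY i n iB nB; rewrite coef2M; apply: eq_bigr => j _.
apply: eq_bigr => c _; have := ltn_ord j; have := ltn_ord c => ? ?.
by rewrite xX ?yY //; lia.
Qed.

Lemma agree_one B : agree_below B (@ser1 R) 1.
Proof. by move=> [|i] n _ _; rewrite coef1 /= ?coef0 // coefC; case: n. Qed.

Fact ser_mulA : associative (@ser_mul R).
Proof.
move=> x y z; apply: agree_below_eq => B.
exists (ser_poly B x * (ser_poly B y * ser_poly B z)); split.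
  by do 2?apply: agree_mul; exact: agree_ser_poly.
by rewrite mulrA; do 2?apply: agree_mul; exact: agree_ser_poly.
Qed.

Fact ser_mulC : commutative (@ser_mul R).
Proof.
move=> x y; apply: agree_below_eq => B; exists (ser_poly B x * ser_poly B y).
by rewrite [X in _ /\ agree_below _ _ X]mulrC; split; apply: agree_mul;
  exact: agree_ser_poly.
Qed.

Fact ser_mul1 : left_id (@ser1 R) (@ser_mul R).
Proof.
move=> x; apply: agree_below_eq => B; exists (1 * ser_poly B x).
split; first by apply: agree_mul; [exact: agree_one | exact: agree_ser_poly].
by rewrite mul1r; exact: agree_ser_poly.
Qed.

Fact ser_mulDl : left_distributive (@ser_mul R) (@ser_add R).
Proof.
move=> x y z; apply: ser_ext => i n; rewrite /ser_mul /ser_add -big_split.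
by apply: eq_bigr => j _; rewrite -big_split; apply: eq_bigr => c _; rewrite mulrDl.
Qed.

Fact ser1_neq0 : @ser1 R != ser0 R.
Proof. by apply/eqP => /(congr1 (fun x : S => x 0%N 0%N)) /eqP; rewrite oner_eq0. Qed.

HB.instance Definition _ :=
  GRing.Zmodule_isComNzRing.Build S ser_mulA ser_mulC ser_mul1 ser_mulDl ser1_neq0.

Definition ser_scale (c : C) (x : S) : S := fun i n => c * x i n.

Fact ser_scaleA a b (x : S) : ser_scale a (ser_scale b x) = ser_scale (a * b) x.
Proof. by apply: ser_ext => i n; rewrite /ser_scale mulrA. Qed.
Fact ser_scale1 : left_id 1 ser_scale.
Proof. by move=> x; apply: ser_ext => i n; rewrite /ser_scale mul1r. Qed.
Fact ser_scaleDr : right_distributive ser_scale +%R.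
Proof. by move=> a x y; apply: ser_ext => i n; rewrite /ser_scale mulrDr. Qed.
Fact ser_scaleDl (x : S) : {morph ser_scale^~ x : a b / a + b}.
Proof. by move=> a b; apply: ser_ext => i n; rewrite /ser_scale mulrDl. Qed.

HB.instance Definition _ :=
  GRing.Zmodule_isLmodule.Build C S ser_scaleA ser_scale1 ser_scaleDr ser_scaleDl.

Fact ser_scaleAl a (x y : S) : ser_scale a (x * y) = ser_scale a x * y.
Proof.
apply: ser_ext => i n; rewrite /ser_scale /= /ser_mul mulr_sumr.
by apply: eq_bigr => j _; rewrite mulr_sumr; apply: eq_bigr => c _; rewrite mulrA.
Qed.

HB.instance Definition _ := GRing.Lmodule_isLalgebra.Build C S ser_scaleAl.
HB.instance Definition _ := GRing.Lalgebra_isComAlgebra.Build C S.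

Lemma ser_mulE (x y : S) : x * y = ser_mul x y. Proof. by []. Qed.
Lemma ser_coefD (x y : S) i n : (x + y) i n = x i n + y i n. Proof. by []. Qed.
Lemma ser_coefN (x : S) i n : (- x) i n = - x i n. Proof. by []. Qed.
Lemma ser_coefB (x y : S) i n : (x - y) i n = x i n - y i n. Proof. by []. Qed.
Lemma ser_coefZ c (x : S) i n : (c *: x) i n = c * x i n. Proof. by []. Qed.

Lemma ser_coef_sum I r (P : pred I) (F : I -> S) i n :
  (\sum_(j <- r | P j) F j) i n = \sum_(j <- r | P j) F j i n.
Proof. by apply: (big_morph (fun x : S => x i n)). Qed.

End SeriesAlgebra.

Section Congruences.
Variable R : realType.
Local Notation S := (ser R).

Definition eps : S := ser_shift 1.

Lemma agree_shift B (x : S) X :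
  agree_below B x X -> agree_below B (ser_shift x) ('X * X).
Proof.
move=> xX [|i] n iB nB; rewrite coefXM /= ?coef0 // xX //; lia.
Qed.

Lemma ser_shiftE (x : S) : ser_shift x = eps * x.
Proof.
apply: agree_below_eq => B; exists ('X * ser_poly B x).
split; first exact/agree_shift/agree_ser_poly.
rewrite -[X in X * ser_poly B x]mulr1 ser_mulE.
by apply: agree_mul; [exact/agree_shift/agree_one | exact: agree_ser_poly].
Qed.

Lemma agree_embK B (x : S) X :
  agree_below B x X -> agree_below B (embK x) (X \Po 'X^2).
Proof.
move=> xX i n iB nB; rewrite coef_comp_poly_Xn // dvdn2 /embK.
by case: (odd i) => /=; rewrite ?coef0 // divn2 xX // -divn2; lia.
Qed.

Lemma embKM (x y : S) : embK (x * y) = embK x * embK y.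
Proof.
apply: agree_below_eq => B.
exists ((ser_poly B x \Po 'X^2) * (ser_poly B y \Po 'X^2)); split.
  by rewrite -comp_polyM; apply/agree_embK/agree_mul; exact: agree_ser_poly.
by apply: agree_mul; apply: agree_embK; exact: agree_ser_poly.
Qed.

Lemma embKD (x y : S) : embK (x + y) = embK x + embK y.
Proof.
by apply: ser_ext => i n; rewrite /embK !ser_coefD; case: odd; rewrite ?addr0.
Qed.

Lemma embKN (x : S) : embK (- x) = - embK x.
Proof.
by apply: ser_ext => i n; rewrite /embK !ser_coefN; case: odd; rewrite ?oppr0.
Qed.

Lemma embK1 : embK 1 = 1 :> S.
Proof. by apply: ser_ext => -[|[|i]] n; rewrite /embK //=; case: odd. Qed.

Lemma embK_eps : embK eps = eps ^+ 2.
Proof.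
apply: agree_below_eq => B; exists (('X * 1) * ('X * 1)); split.
  have -> : ('X * 1) * ('X * 1) = ('X * 1) \Po ('X^2 : {poly {poly R[i]}}).
    by rewrite !mulr1 comp_polyX expr2.
  exact/agree_embK/agree_shift/agree_one.
by apply: agree_mul; exact/agree_shift/agree_one.
Qed.

Lemma eqmod_sym k (x y : S) : eqmod k x y -> eqmod k y x.
Proof. by move=> xy i n ik; rewrite xy. Qed.

Lemma eqmod_trans k (x y z : S) : eqmod k x y -> eqmod k y z -> eqmod k x z.
Proof. by move=> xy yz i n ik; rewrite xy ?yz. Qed.

Lemma eqmod_leq k k' (x y : S) : (k <= k')%N -> eqmod k' x y -> eqmod k x y.
Proof. by move=> kk' xy i n ik; rewrite xy //; lia. Qed.

Lemma eqmodD k (x x' y y' : S) :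
  eqmod k x x' -> eqmod k y y' -> eqmod k (x + y) (x' + y').
Proof. by move=> xx' yy' i n ik; rewrite !ser_coefD xx' ?yy'. Qed.

Lemma eqmodN k (x x' : S) : eqmod k x x' -> eqmod k (- x) (- x').
Proof. by move=> xx' i n ik; rewrite !ser_coefN xx'. Qed.

Lemma eqmodM k (x x' y y' : S) :
  eqmod k x x' -> eqmod k y y' -> eqmod k (x * y) (x' * y').
Proof.
move=> xx' yy' i n ik; apply: eq_bigr => j _; apply: eq_bigr => c _.
by have := ltn_ord j => ?; rewrite xx' ?yy' //; lia.
Qed.

Lemma eqmod_sum k I r (P : pred I) (F G : I -> S) :
  (forall j, P j -> eqmod k (F j) (G j)) ->
  eqmod k (\sum_(j <- r | P j) F j) (\sum_(j <- r | P j) G j).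
Proof. by move=> FG; apply: big_ind2 => //; exact: eqmodD. Qed.

Lemma eqmod_subr0 k (x y : S) : eqmod k (x - y) 0 <-> eqmod k x y.
Proof.
split=> xy i n ik; last by rewrite ser_coefB xy // subrr.
by apply/eqP; rewrite -subr_eq0 -ser_coefB xy.
Qed.

Lemma eqmod0M a b (x y : S) :
  eqmod a x 0 -> eqmod b y 0 -> eqmod (a + b) (x * y) 0.
Proof.
move=> x0 y0 i n iab; apply: big1 => j _; apply: big1 => c _.
have := ltn_ord j => ?; case: (ltnP j a) => ja; first by rewrite x0 // mul0r.
by rewrite y0 ?mulr0 //; lia.
Qed.

Lemma eqmod0X j (x : S) : eqmod 1 x 0 -> eqmod j (x ^+ j) 0.
Proof.
move=> x0; elim: j => [|j IHj]; first by [].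
by rewrite exprS; exact: (eqmod0M x0 IHj).
Qed.

Lemma eqmod_trunc k (x : S) : eqmod k (ser_trunc k x) x.
Proof. by move=> i n ik; rewrite /ser_trunc ik. Qed.

Lemma reduced_trunc k (x : S) : reduced k (ser_trunc k x).
Proof. by move=> i n ki; rewrite /ser_trunc ltnNge ki. Qed.

Lemma reduced0 (x : S) : reduced 0 x -> x = 0.
Proof. by move=> x0; apply: ser_ext => i n; exact: x0. Qed.

Lemma embK_eqmod m (x y : S) : eqmod m x y -> eqmod (2 * m) (embK x) (embK y).
Proof.
by move=> xy i n im; rewrite /embK; case: ifP => // _; rewrite xy // -divn2; lia.
Qed.

(* Geometric series: w^-1 = \sum_(j < m) (1 - w)^j modulo sigma^m. *)
Lemma eqmod_inv_exists m (w : S) :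
  eqmod 1 w 1 -> exists v, reduced m v /\ eqmod m (w * v) 1.
Proof.
move=> w1; set t := 1 - w.
have t0 : eqmod 1 t 0 by apply/eqmod_subr0/eqmod_sym.
exists (ser_trunc m (\sum_(j < m) t ^+ j)); split; first exact: reduced_trunc.
apply: (eqmod_trans (y := w * \sum_(j < m) t ^+ j)).
  exact/eqmodM/eqmod_trunc.
have -> : w * \sum_(j < m) t ^+ j = 1 - t ^+ m.
  have -> : w = - (t - 1) by rewrite /t; ring.
  by rewrite mulNr -subrX1 opprB.
rewrite -[X in eqmod _ _ X]addr0 -oppr0.
by apply: eqmodD => //; exact/eqmodN/eqmod0X.
Qed.

Lemma invKP m (w : S) :
  eqmod 1 w 1 -> reduced m (invK m w) /\ eqmod m (w * invK m w) 1.
Proof. by move/(eqmod_inv_exists m); exact: epsilon_spec. Qed.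

Lemma inK_eqmod m (x y : S) : eqmod (2 * m) x y -> inK m y -> inK m x.
Proof. by move=> xy Ky i n im io; rewrite xy // Ky. Qed.

Lemma inKM m (x y : S) : inK m x -> inK m y -> inK m (x * y).
Proof.
move=> Kx Ky i n im io; apply: big1 => j _; apply: big1 => c _.
have := ltn_ord j => ?; case oj: (odd j); first by rewrite Kx ?mul0r //; lia.
rewrite Ky ?mulr0 //; first lia.
by move: io; rewrite -{1}(subnK (_ : (j <= i)%N)) ?oddD ?oj ?addbF //; lia.
Qed.

Lemma inK_embK m (x : S) : inK m (embK x).
Proof. by move=> i n _ io; rewrite /embK io. Qed.

Lemma inK_embK_eps m (x y : S) : eqmod m y 0 -> inK m (embK x + eps * embK y).
Proof.
move=> y0 i n im io; rewrite ser_coefD -ser_shiftE /embK io add0r.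
case: i im io => [|i] //= im io.
by rewrite (negbTE io) y0 // -divn2; lia.
Qed.

End Congruences.

Arguments eps {R}.

Section Gamma.
Variable R : realType.
Local Notation S := (ser R).

Definition gamma_spec m (g c : S) := reduced m c /\ inK m (g * (1 + eps * embK c)).

Definition ser_even (x : S) : S := fun i n => x i.*2 n.
Definition ser_odd (x : S) : S := fun i n => x i.*2.+1 n.

Lemma ser_even_odd (x : S) : x = embK (ser_even x) + eps * embK (ser_odd x).
Proof.
apply: ser_ext => -[|i] n; rewrite ser_coefD -ser_shiftE /embK /= ?addr0 //.
have := odd_double_half i; rewrite uphalf_half.
by case: (odd i) => /= i2; rewrite ?addr0 ?add0r /ser_even /ser_odd;
  congr x; move: i2; rewrite -!muln2; lia.
Qed.

(* Induction on [i]: the coefficient of [eps^(2i+1)] in [g * (eps * embK d)]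
   is [d_i] plus terms involving only [d_j], [j < i]. *)
Lemma inK_eps_embK_eqmod0 m (g d : S) :
  eqmod 1 g 1 -> inK m (g * (eps * embK d)) -> eqmod m d 0.
Proof.
move=> g1 Kgd; elim/ltn_ind=> i IHi n im.
have := Kgd i.*2.+1 n; rewrite -ser_shiftE.
set z := ser_shift (embK d).
have z_lt : forall j c, (j < i.*2.+1)%N -> z j c = 0.
  move=> [|j] c //= ji; rewrite /embK; case: ifP => // _.
  by apply: IHi; rewrite -divn2; lia.
have z_top c : z i.*2.+1 c = d i c by rewrite /z /= /embK odd_double doubleK.
rewrite ser_mulE /ser_mul big_ord_recl [X in _ + X]big1 ?addr0; last first.
  move=> j _; apply: big1 => c _; rewrite z_lt ?mulr0 //.
  by have := ltn_ord j; rewrite /= /bump leq0n add1n; lia.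
rewrite big_ord_recl [X in _ + X]big1 ?addr0; last first.
  by move=> c _; rewrite g1 // mul0r.
by rewrite g1 // mul1r !subn0 z_top; apply; rewrite ?odd_double //; lia.
Qed.

Lemma gamma_spec_uniq m (g c c' : S) :
  eqmod 1 g 1 -> gamma_spec m g c -> gamma_spec m g c' -> c = c'.
Proof.
move=> g1 [rc Kc] [rc' Kc'].
have Kd : inK m (g * (eps * embK (c - c'))).
  have -> : g * (eps * embK (c - c')) =
      g * (1 + eps * embK c) - g * (1 + eps * embK c').
    by rewrite embKD embKN; ring.
  by move=> i n im io; rewrite ser_coefB Kc // Kc' // subr0.
have /eqmod_subr0 cc' := inK_eps_embK_eqmod0 g1 Kd.
apply: ser_ext => i n; case: (ltnP i m) => im; first exact: cc'.
by rewrite rc // rc'.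
Qed.

(* With [g = a(eps^2) + eps b(eps^2)], take [c = - b / a]. *)
Lemma gamma_spec_exists m (g : S) : eqmod 1 g 1 -> exists c, gamma_spec m g c.
Proof.
move=> g1; set a := ser_even g; set b := ser_odd g.
have a1 : eqmod 1 a 1 by move=> [|i] n //; exact: g1.
have [v [_ av]] := eqmod_inv_exists m a1.
exists (ser_trunc m (- (b * v))); split; first exact: reduced_trunc.
apply: (inK_eqmod (y := g * (1 + eps * embK (- (b * v))))).
  by apply/eqmodM/eqmodD/eqmodM/embK_eqmod/eqmod_trunc.
have -> : g * (1 + eps * embK (- (b * v))) =
    embK (a + eps * (b * - (b * v))) + eps * embK (b + a * - (b * v)).
  by rewrite {1}[g]ser_even_odd !embKD !embKM embK_eps; ring.
apply: inK_embK_eps; have -> : b + a * - (b * v) = b * (1 - a * v) by ring.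
by rewrite -(mulr0 b); apply/eqmodM/eqmod_subr0/eqmod_sym.
Qed.

Lemma gamma_spec_circ m (g g1 g2 c1 c2 : S) : eqmod (2 * m) g (g1 * g2) ->
  gamma_spec m g1 c1 -> gamma_spec m g2 c2 -> gamma_spec m g (circ m c1 c2).
Proof.
move=> g12 [_ K1] [_ K2]; split; first exact: reduced_trunc.
set w := ser_add 1 (ser_shift (ser_mul c1 c2)).
have w1 : eqmod 1 w 1 by move=> [|i] n // _; rewrite /w /ser_add /= addr0.
have [_ wV] := invKP m w1; set v := invK m w in wV *.
apply: (inK_eqmod (y := g1 * g2 * (1 + eps * embK ((c1 + c2) * v)))).
  by apply/eqmodM/eqmodD/eqmodM/embK_eqmod/eqmod_trunc.
set u1 := g1 * (1 + eps * embK c1); set u2 := g2 * (1 + eps * embK c2).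
apply: (inK_eqmod (y := u1 * u2 * embK v)).
  have -> : u1 * u2 * embK v = g1 * g2 * (embK (w * v) + eps * embK ((c1 + c2) * v)).
    by rewrite /u1 /u2 /w -ser_mulE ser_shiftE !embKM !embKD embK1 !embKM embK_eps; ring.
  apply/eqmodM/eqmodD => //; rewrite -embK1; exact/embK_eqmod/eqmod_sym.
by do 2?apply: inKM => //; exact: inK_embK.
Qed.

Lemma gammaKP m (g : S) :
  (exists c, gamma_spec m g c) -> gamma_spec m g (gammaK m g).
Proof.
have -> : gamma_spec m g = fun c =>
    reduced m c /\ inK m (ser_mul g (ser_add 1 (ser_shift (embK c)))).
  by apply/funext => c; rewrite /gamma_spec ser_shiftE.
exact: epsilon_spec.
Qed.

Lemma gammaKM m (g g1 g2 : S) :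
  eqmod 1 g 1 -> eqmod 1 g1 1 -> eqmod 1 g2 1 -> eqmod (2 * m) g (g1 * g2) ->
  gammaK m g = circ m (gammaK m g1) (gammaK m g2).
Proof.
move=> g_1 g1_1 g2_1 g12; apply: (gamma_spec_uniq g_1).
  exact/gammaKP/gamma_spec_exists.
by apply: gamma_spec_circ g12 _ _; exact/gammaKP/gamma_spec_exists.
Qed.

Lemma gammaK0 (g : S) : gammaK 0 g = 0.
Proof.
apply: reduced0; have [] // := @gammaKP 0 g.
by exists 0; split=> // i n; rewrite muln0.
Qed.

Lemma circ0 (c1 c2 : S) : circ 0 c1 c2 = 0.
Proof. exact/reduced0/reduced_trunc. Qed.

End Gamma.

Lemma sum_antidiagonal (V : nmodType) k (F : nat -> nat -> V) :
  \sum_(j < k) \sum_(i < j.+1) F (j - i)%N i =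
  \sum_(a < k) \sum_(b < k) (if (a + b < k)%N then F a b else 0).
Proof.
have -> : \sum_(j < k) \sum_(i < j.+1) F (j - i)%N i =
    \sum_(j < k) \sum_(i < k) (if (i <= j)%N then F (j - i)%N i else 0).
  apply: eq_bigr => j _.
  rewrite (big_ord_widen k (fun i => F (j - i)%N i)) ?ltn_ord // big_mkcond /=.
  by apply: eq_bigr => i _; rewrite ltnS.
rewrite exchange_big [RHS]exchange_big; apply: eq_bigr => i _ /=.
have ik := ltn_ord i.
rewrite -(big_mkord xpredT (fun j => if (i <= j)%N then F (j - i)%N i else 0)).
rewrite -(big_mkord xpredT (fun a => if (a + i < k)%N then F a i else 0)).
rewrite (big_cat_nat (leq0n i) (ltnW ik)) /= big1_seq ?add0r; last first.
  by move=> j /andP [_]; rewrite mem_index_iota => /andP [_ ji]; rewrite leqNgt ji.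
rewrite [RHS](big_cat_nat (leq0n (k - i)) (leq_subr i k)) /=.
rewrite [X in _ = _ + X]big1_seq ?addr0; last first.
  move=> a /andP [_]; rewrite mem_index_iota => /andP [ka _].
  by have -> : (a + i < k)%N = false by lia.
have := big_addn 0 k i xpredT (fun j => if (i <= j)%N then F (j - i)%N i else 0).
rewrite add0n => ->; apply: eq_big_nat => a /andP [_ ak].
by rewrite leq_addl addnK; have -> : (a + i < k)%N by lia.
Qed.

Lemma invfact_bin (F : numFieldType) j i : (i <= j)%N ->
  (j`!%:R^-1 : F) * 'C(j, i)%:R = (j - i)`!%:R^-1 * i`!%:R^-1.
Proof.
move=> ij; have := congr1 (fun n => n%:R : F) (bin_fact ij); rewrite !natrM => <-.
have fact_neq0 n : (n`!%:R : F) != 0 by rewrite pnatr_eq0 -lt0n fact_gt0.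
have bin_neq0 : ('C(j, i)%:R : F) != 0 by rewrite pnatr_eq0 -lt0n bin_gt0.
by field; rewrite bin_neq0 !fact_neq0.
Qed.

Section TruncatedExp.
Variable R : realType.
Local Notation C := R[i].
Local Notation S := (ser R).

Definition exp_trunc k (N : S) : S := \sum_(j < k) (j`!%:R^-1 : C) *: N ^+ j.

Lemma exp_truncD k (N1 N2 : S) : eqmod 1 N1 0 -> eqmod 1 N2 0 ->
  eqmod k (exp_trunc k (N1 + N2)) (exp_trunc k N1 * exp_trunc k N2).
Proof.
move=> N1_0 N2_0.
pose F a b : S := ((a`!%:R^-1 : C) * b`!%:R^-1) *: (N1 ^+ a * N2 ^+ b).
have -> : exp_trunc k (N1 + N2) = \sum_(j < k) \sum_(i < j.+1) F (j - i)%N i.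
  apply: eq_bigr => j _; rewrite exprDn scaler_sumr; apply: eq_bigr => i _.
  by rewrite -scalerMnr scalerMnl -mulr_natr invfact_bin // -ltnS.
have -> : exp_trunc k N1 * exp_trunc k N2 = \sum_(a < k) \sum_(b < k) F a b.
  rewrite mulr_suml; apply: eq_bigr => a _; rewrite mulr_sumr.
  by apply: eq_bigr => b _; rewrite -scalerAl -scalerAr scalerA.
rewrite sum_antidiagonal; apply: eqmod_sum => a _; apply: eqmod_sum => b _.
case: ifP => // abk; apply: eqmod_sym => i n ik; rewrite /F ser_coefZ.
rewrite (eqmod0M (eqmod0X (j := a) N1_0) (eqmod0X (j := b) N2_0)) ?mulr0 //; lia.
Qed.

Lemma exp_trunc_unit k (N : S) :
  (0 < k)%N -> eqmod 1 N 0 -> eqmod 1 (exp_trunc k N) 1.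
Proof.
case: k => // k _ N0; rewrite /exp_trunc big_ord_recl /= invr1 scale1r expr0.
rewrite -[X in eqmod _ _ X]addr0; apply: eqmodD => //.
apply: (big_ind (fun x : S => eqmod 1 x 0)) => // [x y x0 y0|j _].
  by rewrite -[0]addr0; exact: eqmodD.
by move=> [|i] n // _; rewrite ser_coefZ (eqmod0X (j := j.+1) N0) ?mulr0.
Qed.

Lemma TayhatE a k (h : Rhat R) :
  Tayhat a k h = ser_trunc k (exp_trunc k (nilpart a k h)).
Proof.
have iterE j : iter j (ser_mul (nilpart a k h)) 1 = nilpart a k h ^+ j.
  by elim: j => //= j ->; rewrite exprS.
rewrite /Tayhat /=; congr ser_trunc; apply: ser_ext => i n.
rewrite /exp_trunc ser_coef_sum; apply: eq_bigr => j _.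
by rewrite iterE ser_coefZ mulrC.
Qed.

Lemma nilpart_eqmod0 a k (h : Rhat R) : eqmod 1 (nilpart a k h) 0.
Proof. by case. Qed.

Lemma nilpartD a k (h1 h2 : Rhat R) :
  nilpart a k (Rhat_add h1 h2) = nilpart a k h1 + nilpart a k h2.
Proof.
apply: ser_ext => -[|i] n; rewrite ser_coefD /nilpart ?addr0 // /Tay.
case: ifP => _; rewrite ?addr0 // -mulrDl /fder -big_split.
by congr (_ * _); apply: eq_bigr => j _; rewrite /Rhat_add mulrDl.
Qed.

Lemma Tayhat_unit a k (h : Rhat R) : (0 < k)%N -> eqmod 1 (Tayhat a k h) 1.
Proof.
move=> k_gt0; rewrite TayhatE.
apply: (eqmod_trans (y := exp_trunc k (nilpart a k h))).
  by apply: eqmod_leq k_gt0 _; exact: eqmod_trunc.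
exact/exp_trunc_unit/nilpart_eqmod0.
Qed.

Lemma TayhatD a k (h1 h2 : Rhat R) :
  eqmod k (Tayhat a k (Rhat_add h1 h2)) (Tayhat a k h1 * Tayhat a k h2).
Proof.
have N1_0 := nilpart_eqmod0 a k h1; have N2_0 := nilpart_eqmod0 a k h2.
rewrite !TayhatE nilpartD.
apply: (eqmod_trans (y := exp_trunc k (nilpart a k h1 + nilpart a k h2))).
  exact: eqmod_trunc.
apply: (eqmod_trans (exp_truncD N1_0 N2_0)).
by apply: eqmodM; apply: eqmod_sym; exact: eqmod_trunc.
Qed.

End TruncatedExp.

Theorem lemma3p15 (R : realType) (alpha : R[i]) (m : nat) (h1 h2 : Rhat R) :
  Upsilon alpha m (Rhat_add h1 h2) = circ m (Upsilon alpha m h1) (Upsilon alpha m h2).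
Proof.
case: m => [|m]; first by rewrite /Upsilon !gammaK0 circ0.
have k_gt0 : (0 < 2 * m.+1)%N by rewrite muln_gt0.
by apply: gammaKM; [exact: Tayhat_unit.. | exact: TayhatD].
Qed.
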